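(* Let $I=CPC$ (classical propositional logic). Then for every formula $\varphi$ (possibly containing $\square$), $\vdash_{L5(I)}\varphi\leftrightarrow\square\varphi$.
   Context: Formulas are built from a countable set $V$ of propositional variables using $\wedge,\vee,\rightarrow,\bot$ and the unary modal operator $\square$. Abbreviations: - $\neg\varphi:=\varphi\rightarrow\bot$; - $\varphi\leftrightarrow\psi:=(\varphi\rightarrow\psi)\wedge(\psi\rightarrow\varphi)$; - $\varphi\equiv\psi:=\square(\varphi\rightarrow\psi)\wedge\square(\psi\rightarrow\varphi)$. For an intermediate logic $I$ (intuitionistic propositional logic extended by axiom schemes that are classical tautologies), the deductive system $L5(I)$ has as axioms all instances of the schemes: (i) all formulas having the form of a theorem of $I$ (possibly containing $\square$); (ii) $\square\varphi\rightarrow\varphi$; (iii) $\square(\varphi\rightarrow\psi)\rightarrow(\square(\psi\rightarrow\chi)\rightarrow\square(\varphi\rightarrow\chi))$; (iv) $\square(\varphi\vee\psi)\rightarrow(\square\varphi\vee\square\psi)$; (v) $\square\varphi\rightarrow\square\square\varphi$; (vi) $\neg\square\varphi\rightarrow\square\neg\square\varphi$. In addition, all formulas $(\varphi\equiv\psi)\rightarrow(\chi[x:=\varphi]\equiv\chi[x:=\psi])$ and all formulas $\varphi\vee\neg\varphi$ are theorems. The rules are: - Modus Ponens; - Axiom Necessitation: from an axiom of the form (i)–(vi) infer $\square$ of it; this rule applies only to axioms (i)–(vi). $\vdash_{L5(I)}\varphi$ means $\varphi$ is derivable. *)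

From Stdlib Require Import Arith.

(* Propositional variables: the countable set V is represented by nat. *)
Inductive fm : Type :=
| Var : nat -> fm
| Bot : fm
| And : fm -> fm -> fm
| Or  : fm -> fm -> fm
| Imp : fm -> fm -> fm
| Box : fm -> fm.

Definition Neg (a : fm) : fm := Imp a Bot.
Definition Iff (a b : fm) : fm := And (Imp a b) (Imp b a).
Definition Equiv (a b : fm) : fm := And (Box (Imp a b)) (Box (Imp b a)).

Fixpoint subst (s : nat -> fm) (a : fm) : fm :=
  match a with
  | Var x => s x
  | Bot => Bot
  | And a b => And (subst s a) (subst s b)
  | Or a b => Or (subst s a) (subst s b)
  | Imp a b => Imp (subst s a) (subst s b)
  | Box a => Box (subst s a)
  end.

Definition subst1 (x : nat) (phi : fm) (chi : fm) : fm :=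
  subst (fun y => if Nat.eqb y x then phi else Var y) chi.

Fixpoint boxfree (a : fm) : Prop :=
  match a with
  | Var _ | Bot => True
  | And a b | Or a b | Imp a b => boxfree a /\ boxfree b
  | Box _ => False
  end.

(* Classical two-valued evaluation (Box is never used on box-free formulas;
   it is evaluated arbitrarily as the identity). *)
Fixpoint beval (v : nat -> bool) (a : fm) : bool :=
  match a with
  | Var x => v x
  | Bot => false
  | And a b => andb (beval v a) (beval v b)
  | Or a b => orb (beval v a) (beval v b)
  | Imp a b => implb (beval v a) (beval v b)
  | Box a => beval v a
  end.

Definition CPC (a : fm) : Prop := boxfree a /\ forall v, beval v a = true.

(* Axiom scheme (i): formulas having the form of a theorem of I,
   i.e. substitution instances (possibly containing Box) of theorems of I. *)
Definition I_instance (I : fm -> Prop) (a : fm) : Prop :=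
  exists (psi : fm) (s : nat -> fm), I psi /\ boxfree psi /\ a = subst s psi.

(* Axioms (i)-(vi): the ones to which Axiom Necessitation applies. *)
Inductive L5_axiom (I : fm -> Prop) : fm -> Prop :=
| ax_I : forall a, I_instance I a -> L5_axiom I a
| ax_T : forall a, L5_axiom I (Imp (Box a) a)
| ax_trans : forall a b c,
    L5_axiom I (Imp (Box (Imp a b)) (Imp (Box (Imp b c)) (Box (Imp a c))))
| ax_disj : forall a b, L5_axiom I (Imp (Box (Or a b)) (Or (Box a) (Box b)))
| ax_4 : forall a, L5_axiom I (Imp (Box a) (Box (Box a)))
| ax_5 : forall a, L5_axiom I (Imp (Neg (Box a)) (Box (Neg (Box a)))).

(* Additional theorems stipulated in the definition of L5(I): the
   substitution principle and tertium non datur (no necessitation). *)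
Inductive L5_extra : fm -> Prop :=
| ex_SP : forall a b chi x,
    L5_extra (Imp (Equiv a b) (Equiv (subst1 x a chi) (subst1 x b chi)))
| ex_TND : forall a, L5_extra (Or a (Neg a)).

Inductive L5_derivable (I : fm -> Prop) : fm -> Prop :=
| d_ax : forall a, L5_axiom I a -> L5_derivable I a
| d_extra : forall a, L5_extra a -> L5_derivable I a
| d_mp : forall a b, L5_derivable I a -> L5_derivable I (Imp a b) ->
    L5_derivable I b
| d_an : forall a, L5_axiom I a -> L5_derivable I (Box a).


(* Necessitating the axiom instance [phi \/ ~phi] and distributing the box
   over the disjunction (axiom (iv)) gives [Box phi \/ Box ~phi].  By axiom
   (ii) each disjunct implies the corresponding unboxed formula, and a
   classical case split then yields [phi <-> Box phi]. *)

Lemma CPC_instance_axiom (psi : fm) (s : nat -> fm) :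
  boxfree psi -> (forall v, beval v psi = true) -> L5_axiom CPC (subst s psi).
Proof.
  intros Hfree Htaut.
  apply ax_I; exists psi, s; repeat split; assumption.
Qed.

Lemma derivable_box_excluded_middle (a : fm) :
  L5_derivable CPC (Box (Or a (Neg a))).
Proof.
  apply d_an.
  apply (CPC_instance_axiom (Or (Var 0) (Neg (Var 0))) (fun _ => a)).
  - simpl; tauto.
  - intro v; simpl; destruct (v 0); reflexivity.
Qed.

Lemma derivable_box_or_box_neg (a : fm) :
  L5_derivable CPC (Or (Box a) (Box (Neg a))).
Proof.
  apply (d_mp _ (Box (Or a (Neg a)))).
  - apply derivable_box_excluded_middle.
  - apply d_ax, ax_disj.
Qed.

Lemma derivable_iff_of_box_cases (a : fm) :
  L5_derivable CPC
    (Imp (Or (Box a) (Box (Neg a)))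
      (Imp (Imp (Box (Neg a)) (Neg a))
        (Imp (Imp (Box a) a) (Iff a (Box a))))).
Proof.
  apply d_ax.
  set (p := Var 0); set (q := Var 1); set (r := Var 2).
  apply (CPC_instance_axiom
    (Imp (Or q r) (Imp (Imp r (Neg p)) (Imp (Imp q p) (Iff p q))))
    (fun n => match n with 0 => a | 1 => Box a | _ => Box (Neg a) end)).
  - simpl; tauto.
  - intro v; simpl; destruct (v 0), (v 1), (v 2); reflexivity.
Qed.

Theorem lemma6p1 : forall phi : fm, L5_derivable CPC (Iff phi (Box phi)).
Proof.
  intro phi.
  apply (d_mp _ (Imp (Box phi) phi)); [apply d_ax, ax_T |].
  apply (d_mp _ (Imp (Box (Neg phi)) (Neg phi))); [apply d_ax, ax_T |].
  apply (d_mp _ (Or (Box phi) (Box (Neg phi)))).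
  - apply derivable_box_or_box_neg.
  - apply derivable_iff_of_box_cases.
Qed.
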